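(* Let $G$ be a group and let $A$ and $B$ be torsion-free abelian subgroups of $G$ such that each of $A$ and $B$ has finite index in $G$, is normal in $G$, and is a maximal abelian subgroup of $G$. Then $A=B$.
   Context: A subgroup is maximal abelian if it is abelian and is not properly contained in any abelian subgroup of $G$. *)

(* abstract (possibly infinite) groups; MathComp's finite groups
   would trivialize torsion-freeness. *)
From Stdlib Require Import List.

Record Group := {
  carrier :> Type;
  gmul : carrier -> carrier -> carrier;
  ginv : carrier -> carrier;
  gone : carrier;
  gmul_assoc : forall x y z, gmul x (gmul y z) = gmul (gmul x y) z;
  gmul_one_l : forall x, gmul gone x = x;
  gmul_one_r : forall x, gmul x gone = x;
  gmul_inv_l : forall x, gmul (ginv x) x = gone;
  gmul_inv_r : forall x, gmul x (ginv x) = gone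
}.

Section GroupDefs.
Variable G : Group.

Fixpoint gpow (x : G) (n : nat) : G :=
  match n with O => gone G | S m => gmul G x (gpow x m) end.

Definition is_subgroup (H : G -> Prop) : Prop :=
  H (gone G) /\ (forall x y, H x -> H y -> H (gmul G x y)) /\
  (forall x, H x -> H (ginv G x)).

Definition is_abelian (H : G -> Prop) : Prop :=
  forall x y, H x -> H y -> gmul G x y = gmul G y x.

Definition torsion_free (H : G -> Prop) : Prop :=
  forall x n, H x -> gpow x (S n) = gone G -> x = gone G.

(* finitely many left cosets h H cover G *)
Definition finite_index (H : G -> Prop) : Prop :=
  exists l : list G, forall g, exists h, In h l /\ H (gmul G (ginv G h) g).

Definition is_normal (H : G -> Prop) : Prop :=
  forall g x, H x -> H (gmul G (gmul G g x) (ginv G g)).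

Definition maximal_abelian (H : G -> Prop) : Prop :=
  is_subgroup H /\ is_abelian H /\
  forall K : G -> Prop, is_subgroup K -> is_abelian K ->
    (forall x, H x -> K x) -> forall x, K x -> H x.
End GroupDefs.

(* Let a in A and b in B. Since B has finite index, some power a^n lies in B,
   so it commutes with b; hence b a b^-1, which lies in A by normality, has the
   same n-th power as a. Taking n-th roots is injective in the torsion-free
   abelian group A, so b a b^-1 = a. Thus A and B centralize each other, and
   AB is an abelian subgroup containing both; maximality of each forces
   A = AB = B. *)
From Stdlib Require Import List PeanoNat Lia Classical ClassicalEpsilon.

Lemma pigeonhole_nat {T : Type} (l : list T) (f : nat -> T) :
  (forall i, In (f i) l) -> exists i d, f i = f (i + S d).
Proof.
  intros Hl. apply NNPP; intros Hno.
  assert (Hnd : NoDup (map f (seq 0 (S (length l))))).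
  { apply NoDup_map_NoDup_ForallPairs; [|apply seq_NoDup].
    intros i j _ _ Hij.
    destruct (Nat.lt_trichotomy i j) as [Hlt | [Heq | Hlt]]; [exfalso | exact Heq | exfalso];
      apply Hno.
    - exists i, (j - i - 1). now replace (i + S (j - i - 1)) with j by lia.
    - exists j, (i - j - 1). now replace (j + S (i - j - 1)) with i by lia. }
  assert (Hincl : incl (map f (seq 0 (S (length l)))) l).
  { intros h Hh. apply in_map_iff in Hh. destruct Hh as [i [<- _]]. apply Hl. }
  pose proof (NoDup_incl_length Hnd Hincl) as Hlen.
  rewrite length_map, length_seq in Hlen. lia.
Qed.

Section GroupLemmas.
Variable G : Group.
Local Notation "x * y" := (gmul G x y).
Local Notation "1" := (gone G).
Local Notation inv := (ginv G).
Local Notation "x ^ n" := (gpow G x n).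

Lemma mulKg (x y : G) : inv x * (x * y) = y.
Proof. now rewrite gmul_assoc, gmul_inv_l, gmul_one_l. Qed.

Lemma invg_unique (x y : G) : x * y = 1 -> inv x = y.
Proof. intros H. now rewrite <- (mulKg x y), H, gmul_one_r. Qed.

Lemma mulg_inv_eq1 (x y : G) : x * inv y = 1 -> x = y.
Proof.
  intros H. rewrite <- (gmul_one_l G y), <- H.
  now rewrite <- gmul_assoc, gmul_inv_l, gmul_one_r.
Qed.

Lemma expg1n n : (1 : G) ^ n = 1.
Proof. induction n as [|n IH]; simpl; [|rewrite IH]; auto using gmul_one_l. Qed.

Lemma expgD (x : G) n m : x ^ (n + m) = x ^ n * x ^ m.
Proof.
  induction n as [|n IH]; simpl.
  - now rewrite gmul_one_l.
  - now rewrite IH, gmul_assoc.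
Qed.

Lemma commute_expg (x y : G) n : x * y = y * x -> x * y ^ n = y ^ n * x.
Proof.
  intros H; induction n as [|n IH]; simpl.
  - now rewrite gmul_one_l, gmul_one_r.
  - now rewrite gmul_assoc, H, <- gmul_assoc, IH, gmul_assoc.
Qed.

Lemma expgMn (x y : G) n : x * y = y * x -> (x * y) ^ n = x ^ n * y ^ n.
Proof.
  intros H; induction n as [|n IH]; simpl.
  - now rewrite gmul_one_l.
  - rewrite IH, <- !gmul_assoc; f_equal.
    rewrite !gmul_assoc, (commute_expg y x n); auto.
Qed.

Lemma conjg_expg (b a : G) n : (b * a * inv b) ^ n = b * a ^ n * inv b.
Proof.
  induction n as [|n IH]; simpl.
  - now rewrite gmul_one_r, gmul_inv_r.
  - rewrite IH, <- !gmul_assoc, mulKg. reflexivity.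
Qed.

Lemma finite_index_expg (H : G -> Prop) (x : G) :
  is_subgroup G H -> finite_index G H -> exists n, H (x ^ S n).
Proof.
  intros [_ [HM HV]] [l Hl].
  pose (rep i := proj1_sig (constructive_indefinite_description _ (Hl (x ^ i)))).
  assert (Hrep : forall i, In (rep i) l /\ H (inv (rep i) * x ^ i)).
  { intros i. exact (proj2_sig (constructive_indefinite_description _ (Hl (x ^ i)))). }
  destruct (pigeonhole_nat l rep (fun i => proj1 (Hrep i))) as [i [d Heq]].
  exists d.
  destruct (Hrep i) as [_ Hi], (Hrep (i + S d)) as [_ Hj].
  rewrite <- Heq, expgD, gmul_assoc in Hj.
  pose proof (HM _ _ (HV _ Hi) Hj) as Hd.
  now rewrite mulKg in Hd.
Qed.

Lemma torsion_free_expg_inj (A : G -> Prop) (a c : G) n :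
  is_subgroup G A -> is_abelian G A -> torsion_free G A ->
  A a -> A c -> c ^ S n = a ^ S n -> c = a.
Proof.
  intros [_ [AM AV]] abA tfA Ha Hc Hn.
  apply mulg_inv_eq1, (tfA _ n); [auto|].
  rewrite expgMn, Hn, <- expgMn, gmul_inv_r by (apply abA; auto).
  apply expg1n.
Qed.

Lemma normal_torsion_free_centralizes (A B : G -> Prop) (a b : G) :
  is_subgroup G A -> is_abelian G A -> torsion_free G A -> is_normal G A ->
  is_subgroup G B -> is_abelian G B -> finite_index G B ->
  A a -> B b -> a * b = b * a.
Proof.
  intros sA abA tfA nA sB abB fiB Ha Hb.
  destruct (finite_index_expg B a sB fiB) as [n Hn].
  assert (Hconj : b * a * inv b = a).
  { apply (torsion_free_expg_inj A a _ n); auto.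
    rewrite conjg_expg, <- gmul_assoc.
    rewrite (abB _ _ Hn (proj2 (proj2 sB) _ Hb)).
    now rewrite gmul_assoc, gmul_inv_r, gmul_one_l. }
  rewrite <- Hconj at 1. now rewrite <- gmul_assoc, gmul_inv_l, gmul_one_r.
Qed.

Definition subgroup_prod (A B : G -> Prop) (z : G) : Prop :=
  exists a b, A a /\ B b /\ z = a * b.

Section CommutingSubgroups.
Variables A B : G -> Prop.
Hypothesis sA : is_subgroup G A.
Hypothesis sB : is_subgroup G B.
Hypothesis centAB : forall a b, A a -> B b -> a * b = b * a.

Lemma mulg_interchange (a b a' b' : G) : A a' -> B b ->
  (a * b) * (a' * b') = (a * a') * (b * b').
Proof.
  intros Ha' Hb. rewrite <- !gmul_assoc. f_equal.
  rewrite !gmul_assoc, (centAB a' b); auto.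
Qed.

Lemma is_subgroup_prod : is_subgroup G (subgroup_prod A B).
Proof.
  destruct sA as [A1 [AM AV]], sB as [B1 [BM BV]].
  split; [|split].
  - exists 1, 1. repeat split; auto. now rewrite gmul_one_l.
  - intros z w [a [b [Ha [Hb ->]]]] [a' [b' [Ha' [Hb' ->]]]].
    exists (a * a'), (b * b'). repeat split; auto using mulg_interchange.
  - intros z [a [b [Ha [Hb ->]]]].
    exists (inv a), (inv b). repeat split; auto.
    apply invg_unique.
    now rewrite mulg_interchange, !gmul_inv_r, gmul_one_l by auto.
Qed.

Lemma is_abelian_prod : is_abelian G A -> is_abelian G B ->
  is_abelian G (subgroup_prod A B).
Proof.
  intros abA abB z w [a [b [Ha [Hb ->]]]] [a' [b' [Ha' [Hb' ->]]]].
  rewrite (mulg_interchange a b a' b'), (mulg_interchange a' b' a b) by auto.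
  now rewrite (abA a a'), (abB b b').
Qed.

Lemma maximal_abelian_centralized_incl : is_abelian G B ->
  maximal_abelian G A -> forall x, B x -> A x.
Proof.
  intros abB [_ [abA maxA]] x Hx.
  apply (maxA (subgroup_prod A B) is_subgroup_prod (is_abelian_prod abA abB)).
  - intros a Ha. exists a, 1. repeat split; auto using (proj1 sB).
    now rewrite gmul_one_r.
  - exists 1, x. repeat split; auto using (proj1 sA). now rewrite gmul_one_l.
Qed.

End CommutingSubgroups.
End GroupLemmas.

Theorem mainTheorem1 (G : Group) (A B : G -> Prop) :
  is_subgroup G A -> is_subgroup G B ->
  is_abelian G A -> is_abelian G B ->
  torsion_free G A -> torsion_free G B ->
  finite_index G A -> finite_index G B ->
  is_normal G A -> is_normal G B ->
  maximal_abelian G A -> maximal_abelian G B ->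
  forall x, A x <-> B x.
Proof.
  (* Only one direction of the argument is needed: torsion-freeness and
     normality of B and finite index of A play no role. *)
  intros sA sB abA abB tfA _ _ fiB nA _ maxA maxB x.
  assert (centAB : forall a b, A a -> B b -> gmul G a b = gmul G b a).
  { intros a b. apply normal_torsion_free_centralizes; assumption. }
  split.
  - apply (maximal_abelian_centralized_incl G B A); auto.
    intros b a Hb Ha. symmetry; auto.
  - apply (maximal_abelian_centralized_incl G A B); auto.
Qed.
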